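(* Let $p \geq 3$ and $q \geq 2$ be integers and let $L$ be the Laplacian of the graph $K_p \oplus C_q$. Then the spectrum of $L$ consists of the eigenvalue $p$ with multiplicity $p-2$, a simple eigenvalue $\lambda \in (p,p+2]$, and $q$ eigenvalues (counted with multiplicity) in the interval $[0,4]$, which include the simple eigenvalue $0$.
   Context: For integers $p \geq 3$, $q \geq 2$, the graph $K_p \oplus C_q$ has vertex set $\{-p+1,\ldots,0\} \cup \{1,\ldots,q-1\}$ (so $p+q-1$ vertices). Its edges are: every pair of distinct vertices in $\{-p+1,\ldots,0\}$, the edge $\{0,1\}$, and the edges $\{j,j+1\}$ for $1 \leq j \leq q-2$. The Laplacian $L$ is the matrix with $L_{ii}$ equal to the degree of vertex $i$, $L_{ij}=-1$ if $i\neq j$ are adjacent and $0$ otherwise. *)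

From mathcomp Require Import all_boot all_order all_algebra.
Set Implicit Arguments. Unset Strict Implicit. Unset Printing Implicit Defensive.
Import Order.TTheory GRing.Theory Num.Theory.
Local Open Scope ring_scope.

(* Vertex v of K_p (+) C_q (v in {-p+1,...,0} u {1,...,q-1}) is encoded as the
   index v + p - 1 in 'I_(p + q - 1): clique vertices are 0..p-1 (vertex 0 of
   the paper is index p-1), path vertices j are indices j + p - 1. *)
Definition KC_adj (p : nat) (i j : nat) : bool :=
  (i != j) &&
  (((i < p) && (j < p))%N ||
   ((p - 1 <= minn i j)%N && ((i == j.+1) || (j == i.+1)))).

Definition laplacian (R : pzRingType) (n : nat) (adj : rel 'I_n) : 'M[R]_n :=
  \matrix_(i, j) (if i == j then (#|[set k | adj i k]|)%:R
                  else if adj i j then -1 else 0).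

Definition KC_laplacian (R : pzRingType) (p q : nat) : 'M[R]_(p + q - 1) :=
  laplacian R (fun i j : 'I_(p + q - 1) => KC_adj p i j).

From mathcomp Require Import all_boot all_order all_algebra.
From mathcomp Require Import zify ring lra.
From mathcomp Require polyrcf.
Set Implicit Arguments. Unset Strict Implicit. Unset Printing Implicit Defensive.
Import Order.TTheory GRing.Theory Num.Theory.
Local Open Scope ring_scope.

(* The clique vertices -p+1, ..., -2 are twins of -1, so conjugating the
   characteristic matrix by the unipotent matrix that adds their columns to
   the column of -1 (and subtracts the row of -1 from their rows) splits off
   (X - p)^(p-2).  What remains is a tridiagonal block on -1, the hub 0 and the
   path, whose determinant is f = (X - 1) D - (p - 1) Q_(q-1), where
   D = (X - p) Q_(q-1) - Q_(q-2) and Q_(k+2) = (X - 2) Q_(k+1) - Q_k is the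
   characteristic polynomial of a path with one pendant end.
   The roots are located by sign alternation: a monic polynomial of degree n
   whose sign alternates at n + 1 increasing points has one root strictly
   between any two consecutive points.  By the three-term recurrences, Q_k has
   k roots in (0, 4), D alternates at them together with 0 and p + 2, and
   f = X g where g alternates at the first q - 1 roots of D, at 4 and at p + 2.
   This puts q - 1 roots of g in (0, 4) and one in (4, p + 2); for p >= 4 the
   sign of f(p) shows that the last one exceeds p. *)

(** * Reducing the characteristic polynomial *)

Lemma card_ord_count n (P : pred nat) : #|[set k : 'I_n | P k]| = count P (iota 0 n).
Proof.
rewrite -sum1_card (eq_bigl (fun k : 'I_n => P k)); last by move=> k; rewrite inE.
by rewrite -(big_mkord P (fun _ => 1%N)) sum1_count /index_iota subn0.
Qed.

Lemma count_iota_eq_size n (P : pred nat) (s : seq nat) :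
  uniq s -> all (fun x => x < n)%N s ->
  (forall k, (k < n)%N -> P k = (k \in s)) -> count P (iota 0 n) = size s.
Proof.
move=> uniq_s s_lt P_s; rewrite -size_filter; apply/perm_size/uniq_perm => //.
  exact/filter_uniq/iota_uniq.
move=> k; rewrite mem_filter mem_iota add0n leq0n /=.
case: (ltnP k n) => hk; first by rewrite andbT P_s.
by rewrite andbF; apply/esym/negP => /(allP s_lt); rewrite ltnNge hk.
Qed.

Definition KC_deg (p q i : nat) : nat :=
  if (i < p.-1)%N then p.-1 else if i == p.-1 then p
  else if i == (p + q).-2 then 1%N else 2%N.

Lemma card_KC_adj p q (i : 'I_(p + q - 1)) : (3 <= p)%N -> (2 <= q)%N ->
  #|[set k : 'I_(p + q - 1) | KC_adj p i k]| = KC_deg p q i.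
Proof.
move=> hp hq; have hi := ltn_ord i; rewrite card_ord_count /KC_deg.
have mem_clique x k : k \in rem x (iota 0 p) = (k != x) && (k < p)%N.
  by rewrite (mem_rem_uniq _ (iota_uniq 0 p)) inE mem_iota.
have uniq_clique x : uniq (rem x (iota 0 p)) by apply/rem_uniq/iota_uniq.
case: ltnP => [i_clique|i_hub].
  rewrite (@count_iota_eq_size _ _ (rem (i : nat) (iota 0 p))) //.
  - by rewrite size_rem ?mem_iota ?size_iota //; lia.
  - by apply/allP => x; rewrite mem_clique; lia.
  - by move=> k hk; rewrite mem_clique /KC_adj; lia.
case: eqP => [i_eq|i_path].
  rewrite (@count_iota_eq_size _ _ (p :: rem (i : nat) (iota 0 p))).
  - by rewrite /= size_rem ?mem_iota ?size_iota //; lia.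
  - by rewrite /= uniq_clique mem_clique; lia.
  - by apply/allP => x; rewrite inE mem_clique; lia.
  - by move=> k hk; rewrite inE mem_clique /KC_adj; lia.
case: eqP => [i_end|i_inner].
  rewrite (@count_iota_eq_size _ _ [:: (i : nat).-1]) //.
  - by rewrite /= andbT; lia.
  - by move=> k hk; rewrite !inE /KC_adj; lia.
rewrite (@count_iota_eq_size _ _ [:: (i : nat).-1; (i : nat).+1]) //.
- by rewrite /= inE andbT; lia.
- by rewrite /= andbT; apply/andP; split; lia.
- by move=> k hk; rewrite !inE /KC_adj; lia.
Qed.

Definition KC_char_entry (R : nzRingType) (p q i j : nat) : {poly R} :=
  if i == j then 'X - (KC_deg p q i)%:R%:P else if KC_adj p i j then 1 else 0.

Lemma char_poly_mx_KC (R : comNzRingType) p q : (3 <= p)%N -> (2 <= q)%N ->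
  char_poly_mx (KC_laplacian R p q) = \matrix_(i, j) KC_char_entry R p q i j.
Proof.
move=> hp hq; apply/matrixP => i j; rewrite !mxE /KC_char_entry.
case: (eqVneq i j) => [<-|ij]; first by rewrite eqxx mulr1n card_KC_adj.
have -> : (i == j :> nat) = false by apply/negbTE.
rewrite mulr0n sub0r; case: KC_adj.
  by rewrite polyCN opprK polyC1.
by rewrite polyC0 oppr0.
Qed.

Section NatIndexedDeterminants.
Variable R : comNzRingType.
Implicit Types F G : nat -> nat -> R.

Definition detn m F := \det (\matrix_(i < m, j < m) F i j).

Lemma eq_detn m F G :
  (forall i j, (i < m)%N -> (j < m)%N -> F i j = G i j) -> detn m F = detn m G.
Proof.
by move=> FG; rewrite /detn; congr (\det _); apply/matrixP => i j; rewrite !mxE FG.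
Qed.

Lemma detn_row0 m F : (forall j, (0 < j)%N -> F 0%N j = 0) ->
  detn m.+1 F = F 0%N 0%N * detn m (fun i j => F i.+1 j.+1).
Proof.
move=> F0; rewrite /detn (expand_det_row _ ord0) big_ord_recl mxE.
rewrite big1 ?addr0; last by move=> j _; rewrite mxE F0 ?mul0r.
rewrite /cofactor /= expr0 mul1r; congr (_ * \det _).
by apply/matrixP => i j; rewrite !mxE.
Qed.

Lemma detn_tridiag m F :
  (forall j, (1 < j)%N -> F 0%N j = 0) -> (forall i, (1 < i)%N -> F i 0%N = 0) ->
  detn m.+2 F = F 0%N 0%N * detn m.+1 (fun i j => F i.+1 j.+1)
                - F 0%N 1%N * F 1%N 0%N * detn m (fun i j => F i.+2 j.+2).
Proof.
move=> F0j Fi0; rewrite /detn (expand_det_row _ ord0) !big_ord_recl.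
rewrite big1 ?addr0; last by move=> j _; rewrite mxE F0j ?mul0r.
rewrite !mxE /=; congr (_ + _).
  rewrite /cofactor /= expr0 mul1r; congr (_ * \det _).
  by apply/matrixP => i j; rewrite !mxE.
rewrite /cofactor /= expr1 (expand_det_col _ ord0) big_ord_recl.
rewrite big1 ?addr0; last by move=> i _; rewrite !mxE Fi0 ?mul0r.
rewrite !mxE /= /cofactor /= expr0 mul1r.
have -> : \det (row' ord0 (col' ord0 (row' ord0 (col' (lift ord0 ord0)
            (\matrix_(i < m.+2, j < m.+2) F i j))))) =
          \det (\matrix_(i < m, j < m) F i.+2 j.+2).
  by congr (\det _); apply/matrixP => i j; rewrite !mxE.
ring.
Qed.

Lemma detn_scalar_rows s m F a :
  (forall i j, (i < s)%N -> F i j = if j == i then a else 0) ->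
  detn (s + m) F = a ^+ s * detn m (fun i j => F (i + s)%N (j + s)%N).
Proof.
elim: s F => [|s IH] F Fs.
  by rewrite add0n expr0 mul1r; apply: eq_detn => i j _ _; rewrite !addn0.
rewrite addSn detn_row0; last by move=> j hj; rewrite Fs //; case: j hj.
rewrite Fs // eqxx (IH (fun i j => F i.+1 j.+1)); last by move=> i j hi; rewrite Fs.
by rewrite exprS mulrA; congr (_ * _); apply: eq_detn => i j _ _; rewrite !addnS.
Qed.

End NatIndexedDeterminants.

Section FoldIntoColumn.
Variables (R : comNzRingType) (n c : nat).
Hypothesis c_lt_n : (c < n)%N.
Implicit Type F : nat -> nat -> R.

Definition fold_mx : 'M[R]_n := \matrix_(i, k) ((i < c)%N && (k == c :> nat))%:R.

Definition fold_conj F i j : R :=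
  F i j + (j == c)%:R * \sum_(k < c) F i k
  - (i < c)%N%:R * (F c j + (j == c)%:R * \sum_(k < c) F c k).

Lemma fold_mx_sqr : fold_mx *m fold_mx = 0.
Proof.
apply/matrixP => i j; rewrite !mxE big1 // => k _; rewrite !mxE.
by case: (eqVneq (k : nat) c) => [->|_]; rewrite ?ltnn /= ?andbF ?mulr0 ?mul0r.
Qed.

Lemma det_fold_conj (A : 'M[R]_n) :
  \det ((1%:M - fold_mx) *m A *m (1%:M + fold_mx)) = \det A.
Proof.
have fold_inv : (1%:M + fold_mx) *m (1%:M - fold_mx) = 1%:M.
  by rewrite mulmxDl mul1mx mulmxBr mulmx1 fold_mx_sqr subr0 subrK.
by rewrite !det_mulmx mulrC mulrA -det_mulmx fold_inv det1 mul1r.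
Qed.

Lemma fold_conj_mxE F :
  (1%:M - fold_mx) *m \matrix_(i, j) F i j *m (1%:M + fold_mx) =
  \matrix_(i, j) fold_conj F i j.
Proof.
have addE (A B : 'M[R]_n) i j : (A + B) i j = A i j + B i j by rewrite mxE.
have oppE (A : 'M[R]_n) i j : (- A) i j = - A i j by rewrite mxE.
have mul_foldE (G : nat -> nat -> R) (i j : 'I_n) :
    ((\matrix_(i, j) G i j : 'M_n) *m fold_mx) i j =
    (j == c :> nat)%:R * \sum_(k < c) G i k.
  rewrite mxE; under eq_bigr do rewrite !mxE.
  case: (j == c :> nat); last by rewrite mul0r big1 // => k _; rewrite andbF mulr0.
  rewrite mul1r (big_ord_widen n (G i) (ltnW c_lt_n)) [RHS]big_mkcond /=.
  by apply: eq_bigr => k _; rewrite andbT; case: (k < c)%N; rewrite ?mulr1 ?mulr0.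
have fold_mulE (A : 'M_n) i j : (fold_mx *m A) i j = (i < c)%N%:R * A (Ordinal c_lt_n) j.
  rewrite mxE (bigD1 (Ordinal c_lt_n)) //= big1 ?addr0; first by rewrite !mxE eqxx andbT.
  move=> k /negbTE kc; rewrite !mxE.
  have -> : (k == c :> nat) = false by rewrite -kc.
  by rewrite andbF mul0r.
apply/matrixP => i j.
rewrite -mulmxA mulmxBl mul1mx mulmxDr mulmx1 addE oppE fold_mulE !addE !mul_foldE.
by rewrite !mxE.
Qed.

Lemma detn_fold_conj F : detn n (fold_conj F) = detn n F.
Proof. by rewrite /detn -fold_conj_mxE det_fold_conj. Qed.

End FoldIntoColumn.

Section PathPolynomials.
Variable R : comNzRingType.

Fixpoint path_poly (k : nat) : {poly R} :=
  match k with
  | 0 => 1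
  | 1 => 'X - 1%:P
  | (k.+1 as k1).+1 => ('X - 2%:P) * path_poly k1 - path_poly k
  end.

Lemma path_polySS k : path_poly k.+2 = ('X - 2%:P) * path_poly k.+1 - path_poly k.
Proof. by []. Qed.

Definition path_entry (k i j : nat) : {poly R} :=
  if i == j then 'X - (if i.+1 == k then 1 else 2)%:R%:P
  else if (i == j.+1) || (j == i.+1) then 1 else 0.

Lemma detn_path k : detn k (path_entry k) = path_poly k.
Proof.
elim/ltn_ind: k => -[|[|k]] IH; first by rewrite /detn det_mx00.
  by rewrite /detn det_mx11 mxE.
rewrite detn_tridiag; [|by case=> [|[|j]] | by case=> [|[|i]]].
rewrite path_polySS -(IH k.+1) // -(IH k) //.
by congr (_ * _ - _); rewrite /path_entry /= ?mul1r.
Qed.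

(* For a = p and m = q - 2, [reduced_poly] is the determinant of the block left
   after splitting off (X - p)^(p-2), and [hub_poly] is its minor obtained by
   deleting the row and column of vertex -1. *)
Definition hub_poly (a : R) m := ('X - a%:P) * path_poly m.+1 - path_poly m.

Definition reduced_poly (a : R) m :=
  ('X - 1%:P) * hub_poly a m - (a - 1)%:P * path_poly m.+1.

End PathPolynomials.

Section KCReduction.
Variables (R : comNzRingType) (p' q' : nat).
Local Notation p := p'.+3.
Local Notation q := q'.+2.
Local Notation c := p'.+1.
Local Notation F := (KC_char_entry R p q).

(* Block index 0 is vertex -1 (matrix index c), 1 is the hub 0 and 1 + j is
   the path vertex j. *)
Definition KC_block (i j : nat) : {poly R} :=
  match i, j with
  | i.+2, j.+2 => path_entry R q'.+1 i j
  | 0, 0 => 'X - 1%:P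
  | 0, 1 | 1, 2 | 2, 1 => 1
  | 1, 0 => p'.+2%:R%:P
  | 1, 1 => 'X - p%:R%:P
  | _, _ => 0
  end.

Lemma sum_clique_entries_lt i : (i < c)%N ->
  \sum_(k < c) F i k = 'X - p'.+2%:R%:P + p'%:R.
Proof.
move=> ic; rewrite (bigD1 (Ordinal ic)) //=; congr (_ + _).
  by rewrite /KC_char_entry eqxx /KC_deg ifT //=; lia.
rewrite (eq_bigr (fun _ => 1)) ?sumr_const ?cardC1 ?card_ord // => k ki.
have ik : (i == k :> nat) = false by apply: contraNF ki => /eqP ik; apply/eqP/val_inj.
by rewrite /KC_char_entry ik ifT //; have := ltn_ord k; rewrite /KC_adj; lia.
Qed.

Lemma sum_clique_entries_ge i : (c <= i)%N ->
  \sum_(k < c) F i k = if (i < p)%N then c%:R else 0.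
Proof.
move=> ci; rewrite (eq_bigr (fun _ => ((i < p)%N)%:R)) ?sumr_const ?card_ord.
  by case: ifP; rewrite ?mul0rn.
move=> k _; have kc := ltn_ord k; rewrite /KC_char_entry ifF; last lia.
by case: ltnP => ip; [rewrite ifT | rewrite ifF]; rewrite // /KC_adj; lia.
Qed.

Local Ltac decide_entries :=
  rewrite /KC_char_entry /KC_adj /KC_deg /path_entry;
  rewrite (_ : p.-1 = p'.+2) //;
  repeat (case: ifP => ?; try (exfalso; lia)); ring.

Lemma fold_KC_top i j : (i < c)%N ->
  fold_conj c F i j = if j == i then 'X - p%:R%:P else 0.
Proof.
move=> ic; rewrite /fold_conj ic mul1r sum_clique_entries_lt //.
rewrite sum_clique_entries_ge // ltnS leqW //.
by case: (boolP (j == c :> nat)) => jc; rewrite ?mul1r ?mul0r; decide_entries.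
Qed.

Lemma fold_KC_block i j : (i < q.+1)%N -> (j < q.+1)%N ->
  fold_conj c F (i + c) (j + c) = KC_block i j.
Proof.
move=> iq jq; rewrite /fold_conj ltnNge leq_addl /= sum_clique_entries_ge ?leq_addl //.
case: (boolP (j + c == c :> nat)) => jc;
case: i iq => [|[|[|i]]] iq; case: j jq jc => [|[|[|j]]] jq jc //=; decide_entries.
Qed.

Lemma detn_KC_block : detn q.+1 KC_block = reduced_poly p%:R q'.
Proof.
rewrite detn_tridiag; [|by case=> [|[|[|j]]] | by case=> [|[|[|i]]]].
rewrite detn_tridiag; [|by case=> [|[|[|j]]] | by case=> [|[|[|i]]]].
have -> : detn q'.+1 (fun i j => KC_block i.+2 j.+2) = path_poly R q'.+1.
  by rewrite -detn_path; apply: eq_detn => -[|i] j.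
have -> : detn q' (fun i j => KC_block i.+3 j.+3) = path_poly R q'.
  by rewrite -detn_path; apply: eq_detn.
rewrite /reduced_poly /hub_poly /= polyCB polyC1; ring.
Qed.

Lemma char_poly_KC :
  char_poly (KC_laplacian R p q) = ('X - p%:R%:P) ^+ c * reduced_poly p%:R q'.
Proof.
have -> : char_poly (KC_laplacian R p q) = detn (p + q - 1) F.
  by rewrite /char_poly char_poly_mx_KC.
rewrite -(@detn_fold_conj _ _ c); last lia.
rewrite (_ : (p + q - 1 = c + q.+1)%N); last lia.
rewrite (detn_scalar_rows _ (a := 'X - p%:R%:P)); last exact: fold_KC_top.
rewrite -detn_KC_block; congr (_ * _); apply: eq_detn => i j iq jq.
exact: fold_KC_block.
Qed.

End KCReduction.

(** * Sign alternation and interlacing *)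

Section SignAlternation.
Variable R : rcfType.
Implicit Types (P Q : {poly R}) (b s t : R) (ls rs ts ss xs : seq R).

Fixpoint alternates P ts : Prop :=
  if ts is t :: ts' then 0 < (-1) ^+ size ts' * P.[t] /\ alternates P ts' else True.

Fixpoint interlace t ts ss : bool :=
  match ts, ss with
  | [::], [::] => true
  | t' :: ts', s :: ss' => [&& t < s, s < t' & interlace t' ts' ss']
  | _, _ => false
  end.

Lemma interlace_size t ts ss : interlace t ts ss -> size ss = size ts.
Proof. by elim: ts t ss => [|t' ts IH] t [|s ss] //= /and3P[_ _ /IH ->]. Qed.

Lemma interlace_path t ts ss : interlace t ts ss -> path <%R t ss.
Proof.
elim: ts t ss => [|t' ts IH] t [|s ss] //= /and3P[ts' st' I].
rewrite ts' /=; have := IH _ _ I.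
by case: ss I => //= s' ss' _ /andP[t's' ->]; rewrite (lt_trans st' t's').
Qed.

Lemma interlace_gt t ts ss : interlace t ts ss -> all (fun s => t < s) ss.
Proof. by move/interlace_path; apply: order_path_min; apply: lt_trans. Qed.

Lemma interlace_lt t ts ss b :
  all (fun x => x <= b) ts -> interlace t ts ss -> all (fun s => s < b) ss.
Proof.
elim: ts t ss => [|t' ts IH] t [|s ss] //= /andP[t'b tsb] /and3P[_ st' I].
by rewrite (lt_le_trans st' t'b) (IH _ _ tsb I).
Qed.

Lemma interlace_rcons t ts b ss : interlace t (ts ++ [:: b]) ss ->
  exists ss' s, [/\ ss = rcons ss' s, interlace t ts ss', last t ts < s & s < b].
Proof.
elim: ts t ss => [|t' ts IH] t [|s ss] //=.
  by case: ss => [|? ?] /=; [move=> /and3P[t_s s_b _]; exists [::], s | rewrite !andbF].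
move=> /and3P[t_s s_t' /IH [ss' [s' [-> I ts' s'b]]]].
by exists (s :: ss'), s'; rewrite /= t_s s_t' I.
Qed.

Lemma alternates_roots P t ts : path <%R t ts -> alternates P (t :: ts) ->
  exists2 ss, interlace t ts ss & all (root P) ss.
Proof.
elim: ts t => [|t' ts IH] t /=; first by exists [::].
move=> /andP[tt' t'ts] [Pt [Pt' Pts]].
have [ss I rootss] := IH t' t'ts (conj Pt' Pts).
have sign_change : P.[t] * P.[t'] < 0.
  have := mulr_gt0 Pt Pt'; rewrite exprS mulN1r !mulNr mulrACA -expr2 sqrr_sign.
  by rewrite mul1r oppr_gt0.
have [s] := polyrcf.poly_ivtoo (ltW tt') sign_change.
rewrite in_itv /= => /andP[t_s s_t'] root_s.
by exists (s :: ss); rewrite /= ?t_s ?s_t' ?I ?root_s.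
Qed.

Lemma alternates_factor P t ts : P \is monic -> size P = (size ts).+1 ->
  path <%R t ts -> alternates P (t :: ts) ->
  exists2 ss, P = \prod_(s <- ss) ('X - s%:P) & interlace t ts ss.
Proof.
move=> monP sizeP tts altP; have [ss I rootss] := alternates_roots tts altP.
have uniq_ss : uniq_roots ss.
  by rewrite uniq_rootsE; apply/lt_sorted_uniq/(path_sorted (interlace_path I)).
have [Q ?] := uniq_roots_prod_XsubC rootss uniq_ss; subst P.
exists ss => //.
have monXs : \prod_(s <- ss) ('X - s%:P) \is monic by apply: monic_prod_XsubC.
have Q0 : Q != 0.
  by apply: contraTneq monP => ->; rewrite mul0r monicE lead_coef0 eq_sym oner_eq0.
have /size_poly1P[k _ defQ] : size Q == 1%N.
  move: sizeP; rewrite size_Mmonic // size_prod_XsubC (interlace_size I) addnS.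
  by move=> /= sizeQ; rewrite -(eqn_add2r (size ts)) sizeQ add1n.
move/monicP: monP; rewrite defQ lead_coef_Mmonic // lead_coefC => ->.
by rewrite mul1r.
Qed.

Lemma alternates_recurrence P Q rs b : alternates Q rs ->
  {in rs, forall r, P.[r] = - Q.[r]} -> 0 < P.[b] -> alternates P (rs ++ [:: b]).
Proof.
elim: rs => [|r rs IH] /=; first by rewrite expr0 mul1r.
move=> [Qr Qrs] PQ Pb; split.
  by rewrite size_cat addn1 exprS PQ ?mem_head // mulN1r mulrNN.
by apply: IH => // x xrs; apply: PQ; rewrite inE xrs orbT.
Qed.

Lemma prod_subr_gt0 ls s : all (fun l => l < s) ls -> 0 < \prod_(l <- ls) (s - l).
Proof.
by move=> /allP ls_lt; rewrite big_seq prodr_gt0 // => l /ls_lt; rewrite subr_gt0.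
Qed.

Lemma prod_subr_sign xs s : all (fun x => s < x) xs ->
  0 < (-1) ^+ size xs * \prod_(x <- xs) (s - x).
Proof.
elim: xs => [|x xs IH] /=; first by rewrite big_nil mulr1 expr0 ltr01.
move=> /andP[sx sxs]; rewrite big_cons exprS mulN1r mulNr mulrCA -mulNr opprB.
by rewrite mulr_gt0 ?IH ?subr_gt0.
Qed.

Lemma alternates_prod_interlace ls t rs b ss :
  all (fun l => l <= t) ls -> path <%R t rs -> interlace t (rs ++ [:: b]) ss ->
  alternates (\prod_(r <- ls ++ rs) ('X - r%:P)) ss.
Proof.
elim: rs ls t ss => [|r rs IH] ls t [|s ss] //=.
  case: ss => [|? ?] /=; last by rewrite !andbF.
  move=> lst _ /and3P[t_s _ _]; split => //; rewrite cats0 expr0 mul1r horner_prod.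
  under eq_bigr do rewrite hornerXsubC.
  by apply: prod_subr_gt0; apply/allP => l /(allP lst) lt; apply: le_lt_trans t_s.
move=> lst /andP[tr rrs] /and3P[t_s sr I]; split; last first.
  rewrite -cat_rcons; apply: (IH _ r) => //.
  rewrite all_rcons lexx /=; apply/allP => l /(allP lst) lt.
  by apply: ltW; apply: le_lt_trans (lt_trans t_s sr).
rewrite (interlace_size I) size_cat /= addn1 horner_prod.
under eq_bigr do rewrite hornerXsubC.
rewrite big_cat big_cons /=.
set A := \prod_(_ <- ls) _; set B := \prod_(_ <- rs) _.
have -> : (-1) ^+ (size rs).+1 * (A * ((s - r) * B)) =
          (r - s) * (A * ((-1) ^+ size rs * B)) by rewrite exprS; ring.
apply: mulr_gt0; first by rewrite subr_gt0.
apply: mulr_gt0; last first.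
  apply: prod_subr_sign; apply/allP => x xrs.
  exact: lt_trans sr (allP (order_path_min (@lt_trans _ _) rrs) x xrs).
by apply: prod_subr_gt0; apply/allP => l /(allP lst) lt; apply: le_lt_trans t_s.
Qed.

Lemma alternates_transfer P Q xs y z1 z2 : alternates Q (xs ++ [:: y]) ->
  (forall x, x \in xs -> exists2 k, 0 < k & P.[x] = - (k * Q.[x])) ->
  P.[z1] < 0 -> 0 < P.[z2] -> alternates P (xs ++ [:: z1; z2]).
Proof.
elim: xs => [|x xs IH] /=.
  by move=> _ _ Pz1 Pz2; rewrite expr1 expr0 mul1r mulN1r oppr_gt0.
move=> [Qx Qxs] PQ Pz1 Pz2; split; last first.
  by apply: IH => // u uxs; apply: PQ; rewrite inE uxs orbT.
have [k k_gt0 ->] := PQ x (mem_head _ _).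
move: Qx; rewrite !size_cat /= addn1 addn2 => Qx.
have -> : (-1) ^+ (size xs).+2 * - (k * Q.[x]) = k * ((-1) ^+ (size xs).+1 * Q.[x]).
  by rewrite !exprS; ring.
exact: mulr_gt0.
Qed.

End SignAlternation.

(** * Locating the roots *)

Lemma monic_XsubC_mulB (R : nzRingType) (A B : {poly R}) (c : R) :
  A \is monic -> (size B <= size A)%N ->
  ('X - c%:P) * A - B \is monic /\ size (('X - c%:P) * A - B) = (size A).+1.
Proof.
move=> monA sizeB.
have monXA : ('X - c%:P) * A \is monic by rewrite monicMl ?monicXsubC.
have sizeXA : size (('X - c%:P) * A) = (size A).+1.
  by rewrite size_Mmonic ?size_XsubC // -size_poly_eq0 size_XsubC.
have ltB : (size (- B) < size (('X - c%:P) * A)%R)%N by rewrite size_polyN sizeXA ltnS.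
by rewrite size_polyDl // monicE lead_coefDl // -monicE.
Qed.

Section RootLocation.
Variable R : rcfType.
Local Notation Q := (path_poly R).
Implicit Types (a x : R) (m k : nat).

Lemma path_poly_monic_size k : Q k \is monic /\ size (Q k) = k.+1.
Proof.
elim/ltn_ind: k => -[|[|k]] IH; first by rewrite monic1 size_poly1.
  by rewrite monicXsubC size_XsubC.
have [monQ1 sizeQ1] := IH k.+1 (ltnSn _); have [_ sizeQ0] := IH k (ltnW (ltnSn _)).
have := @monic_XsubC_mulB _ _ (Q k) 2 monQ1.
by rewrite path_polySS sizeQ1 sizeQ0 => /(_ (leqnSn _)).
Qed.

Lemma path_poly_at0 k : (Q k).[0] = (-1) ^+ k.
Proof.
elim/ltn_ind: k => -[|[|k]] IH; first by rewrite hornerC.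
  by rewrite !hornerE expr1.
by rewrite path_polySS !hornerE !IH // !exprS; ring.
Qed.

Lemma path_poly_at4 k : (Q k).[4] = 2 * k%:R + 1.
Proof.
elim/ltn_ind: k => -[|[|k]] IH; first by rewrite hornerC mulr0 add0r.
  by rewrite !hornerE; ring.
by rewrite path_polySS !hornerE !IH // -[k.+2]addn2 -[k.+1]addn1 !natrD; ring.
Qed.

Lemma path_poly_ge1_mono x k : 4 <= x -> 1 <= (Q k).[x] <= (Q k.+1).[x].
Proof.
move=> x_ge4; elim: k => [|k /andP[Q0 Q01]].
  by rewrite !hornerE; apply/andP; split; lra.
by rewrite path_polySS !hornerE; apply/andP; split; nra.
Qed.

Lemma path_poly_roots k : exists rs : seq R,
  [/\ size rs = k.+1, path <%R 0 rs, all (fun r => r < 4) rs,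
      Q k.+1 = \prod_(r <- rs) ('X - r%:P) & alternates (Q k) rs].
Proof.
elim: k => [|k [rs [size_rs path_rs rs_lt4 Q1E altQ0]]].
  exists [:: 1]; split => //=; rewrite ?big_seq1 ?andbT ?expr0 ?mul1r ?hornerC ?ltr01 //.
  by lra.
have Q2E r : r \in rs -> (Q k.+2).[r] = - (Q k).[r].
  move=> r_rs; rewrite path_polySS !hornerE.
  by rewrite (rootP (_ : root (Q k.+1) r)) ?mulr0 ?sub0r // Q1E root_prod_XsubC.
have path_rs4 : path <%R 0 (rs ++ [:: 4]).
  rewrite cat_path path_rs /= andbT.
  by have := mem_last 0 rs; rewrite inE => /orP[/eqP->|/(allP rs_lt4)//]; lra.
have [monQ2 sizeQ2] := path_poly_monic_size k.+2.
have altQ2 : alternates (Q k.+2) (0 :: rs ++ [:: 4]).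
  split; last first.
    apply: alternates_recurrence altQ0 Q2E _; rewrite path_poly_at4.
    by have := ler0n R k.+2; lra.
  by rewrite size_cat size_rs addn1 path_poly_at0 -expr2 sqrr_sign ltr01.
have sizeQ2' : size (Q k.+2) = (size (rs ++ [:: 4])).+1.
  by rewrite sizeQ2 size_cat size_rs addn1.
have [ss Q2E' I] := alternates_factor monQ2 sizeQ2' path_rs4 altQ2.
exists ss; split => //.
- by rewrite (interlace_size I) size_cat size_rs addn1.
- exact: interlace_path I.
- apply: interlace_lt I; apply/allP => x; rewrite mem_cat inE.
  by case/orP=> [/(allP rs_lt4)/ltW|/eqP->].
- by rewrite Q1E -[rs]cat0s; apply: alternates_prod_interlace I.
Qed.

Lemma hub_poly_monic_size a m : hub_poly a m \is monic /\ size (hub_poly a m) = m.+3.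
Proof.
have [[monQ1 sizeQ1] [_ sizeQ0]] := (path_poly_monic_size m.+1, path_poly_monic_size m).
have := @monic_XsubC_mulB _ _ (Q m) a monQ1.
by rewrite sizeQ1 sizeQ0 => /(_ (leqnSn _)).
Qed.

Lemma hub_poly_roots a m : 3 <= a -> exists ds dl,
  [/\ size ds = m.+1, path <%R 0 ds, all (fun d => d < 4) ds,
      all (root (hub_poly a m)) ds & alternates (Q m.+1) (ds ++ [:: dl])].
Proof.
move=> a_ge3; have [rs [size_rs path_rs rs_lt4 Q1E altQ0]] := path_poly_roots m.
have hubE r : r \in rs -> (hub_poly a m).[r] = - (Q m).[r].
  move=> r_rs; rewrite /hub_poly !hornerE.
  by rewrite (rootP (_ : root (Q m.+1) r)) ?mulr0 ?sub0r // Q1E root_prod_XsubC.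
have path_rsa : path <%R 0 (rs ++ [:: a + 2]).
  rewrite cat_path path_rs /= andbT.
  by have := mem_last 0 rs; rewrite inE => /orP[/eqP->|/(allP rs_lt4)]; lra.
have altD : alternates (hub_poly a m) (0 :: rs ++ [:: a + 2]).
  split; last first.
    apply: alternates_recurrence altQ0 hubE _; rewrite /hub_poly hornerD hornerN.
    rewrite hornerM hornerXsubC.
    have /andP[] : 1 <= (Q m).[a + 2] <= (Q m.+1).[a + 2].
      by apply: path_poly_ge1_mono; lra.
    nra.
  rewrite size_cat size_rs addn1 /hub_poly !hornerE !path_poly_at0.
  have -> : (-1) ^+ m.+2 * (- a * (-1) ^+ m.+1 - (-1) ^+ m) =
            (a - 1) * ((-1) ^+ m) ^+ 2 by rewrite !exprS; ring.
  by rewrite sqrr_sign mulr1 subr_gt0; lra.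
have [monD sizeD] := hub_poly_monic_size a m.
have sizeD' : size (hub_poly a m) = (size (rs ++ [:: a + 2])).+1.
  by rewrite sizeD size_cat size_rs addn1.
have [ds_all DE I] := alternates_factor monD sizeD' path_rsa altD.
have altQ1 : alternates (Q m.+1) ds_all.
  by rewrite Q1E -[rs]cat0s; apply: alternates_prod_interlace I.
have [ds [dl [ds_allE Ids _ _]]] := interlace_rcons I.
exists ds, dl; split.
- by rewrite (interlace_size Ids) size_rs.
- exact: interlace_path Ids.
- by apply: interlace_lt Ids; apply/allP => x /(allP rs_lt4)/ltW.
- by apply/allP => d d_ds; rewrite DE root_prod_XsubC ds_allE mem_rcons inE d_ds orbT.
- by rewrite cats1 -ds_allE.
Qed.

Lemma reduced_poly_monic_size a m :
  reduced_poly a m \is monic /\ size (reduced_poly a m) = m.+4.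
Proof.
have [[monD sizeD] [_ sizeQ1]] := (hub_poly_monic_size a m, path_poly_monic_size m.+1).
have := @monic_XsubC_mulB _ _ ((a - 1)%:P * Q m.+1) 1 monD.
rewrite sizeD => /(_ _)[] //; rewrite mul_polyC.
by apply: leq_trans (size_scale_leq _ _) _; rewrite sizeQ1.
Qed.

Lemma reduced_poly_at0 a m : (reduced_poly a m).[0] = 0.
Proof.
by rewrite /reduced_poly /hub_poly !hornerE !path_poly_at0 !exprS; ring.
Qed.

Lemma reduced_poly0 a : reduced_poly a 0 = 'X * ('X - 1%:P) * ('X - (a + 1)%:P).
Proof. by rewrite /reduced_poly /hub_poly /=; ring. Qed.

Lemma reduced_poly_at4_lt0 a m : 3 <= a -> (reduced_poly a m.+1).[4] < 0.
Proof.
move=> a_ge3; rewrite /reduced_poly /hub_poly !hornerE !path_poly_at4.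
by have := ler0n R m; rewrite -[m.+1]addn1 natrD; nra.
Qed.

Lemma reduced_poly_at_a2_gt0 a m : 3 <= a -> 0 < (reduced_poly a m).[a + 2].
Proof.
move=> a_ge3; rewrite /reduced_poly /hub_poly.
rewrite !(hornerXsubC, hornerD, hornerN, hornerM, hornerC).
have /andP[] : 1 <= (Q m).[a + 2] <= (Q m.+1).[a + 2].
  by apply: path_poly_ge1_mono; lra.
nra.
Qed.

Lemma reduced_poly_at_a_lt0 a m : 4 <= a -> (reduced_poly a m).[a] < 0.
Proof.
move=> a_ge4; rewrite /reduced_poly /hub_poly.
rewrite !(hornerXsubC, hornerD, hornerN, hornerM, hornerC).
by have /andP[] := path_poly_ge1_mono m a_ge4; nra.
Qed.

Lemma reduced_quot_alternates a m g ds dl : 3 <= a ->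
  reduced_poly a m.+1 = g * 'X -> path <%R 0 ds ->
  all (root (hub_poly a m.+1)) ds -> alternates (Q m.+2) (ds ++ [:: dl]) ->
  alternates g (ds ++ [:: 4; a + 2]).
Proof.
move=> a_ge3 fE path_ds root_ds altQ.
have gE x : g.[x] * x = (reduced_poly a m.+1).[x] by rewrite fE hornerM hornerX.
apply: alternates_transfer altQ _ _ _.
- (* At a root x of the hub polynomial, x g(x) = -(a - 1) Q_(m+2)(x). *)
  move=> x x_ds; have x_gt0 : 0 < x := allP (order_path_min lt_trans path_ds) x x_ds.
  exists ((a - 1) / x); first by rewrite divr_gt0 // subr_gt0; lra.
  apply: (mulIf (lt0r_neq0 x_gt0)); rewrite gE /reduced_poly hornerD hornerN hornerM.
  rewrite (rootP (allP root_ds x x_ds)) mulr0 sub0r hornerM hornerC.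
  by field; rewrite lt0r_neq0.
- by rewrite -(pmulr_llt0 _ (_ : 0 < 4)) ?gE ?reduced_poly_at4_lt0.
- by rewrite -(pmulr_lgt0 _ (_ : 0 < a + 2)) ?gE ?reduced_poly_at_a2_gt0 //; lra.
Qed.

Lemma reduced_poly_root_gt a m lam es : 3 <= a -> 4 < lam ->
  all (fun e => e < 4) es ->
  reduced_poly a m = 'X * ('X - lam%:P) * \prod_(e <- es) ('X - e%:P) -> a < lam.
Proof.
move=> a_ge3 lam_gt4 es_lt4 fE; case: (ltrP a 4) => [|a_ge4]; first lra.
have := reduced_poly_at_a_lt0 m a_ge4.
rewrite fE !hornerM hornerX hornerXsubC horner_prod.
under eq_bigr do rewrite hornerXsubC.
have prod_gt0 : 0 < \prod_(e <- es) (a - e).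
  by apply: prod_subr_gt0; apply/allP => e /(allP es_lt4); lra.
rewrite -mulrA pmulr_rlt0; last lra.
by rewrite pmulr_llt0 // subr_lt0.
Qed.

Lemma reduced_poly_factor a m : 3 <= a -> exists (lam : R) (es : seq R),
  [/\ 4 < lam, a < lam < a + 2, size es = m.+2, all (fun e => 0 < e < 4) es &
      reduced_poly a m.+1 = 'X * ('X - lam%:P) * \prod_(e <- es) ('X - e%:P)].
Proof.
move=> a_ge3.
have [ds [dl [size_ds path_ds ds_lt4 root_ds altQ]]] := hub_poly_roots m.+1 a_ge3.
have [monf sizef] := reduced_poly_monic_size a m.+1.
have /factor_theorem[g] : root (reduced_poly a m.+1) 0 by apply/rootP/reduced_poly_at0.
rewrite subr0 => fE.
have mong : g \is monic by move: monf; rewrite fE monicMr ?monicX.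
have altg := reduced_quot_alternates a_ge3 fE path_ds root_ds altQ.
case: ds size_ds path_ds ds_lt4 altg {root_ds altQ} => [//|d0 ds] [size_ds].
move=> /andP[d0_gt0 path_ds] /andP[d0_lt4 ds_lt4] altg.
have sizeg : size g = (size (ds ++ [:: 4; a + 2])).+1.
  move: sizef; rewrite fE size_Mmonic ?monic_neq0 ?monicX // size_polyX size_cat size_ds.
  by move=> /= h; lia.
have path_g : path <%R d0 (ds ++ [:: 4; a + 2]).
  rewrite cat_path; apply/andP; split; first exact: path_ds.
  have := mem_last d0 ds; rewrite inE /= andbT => /orP[/eqP->|/(allP ds_lt4)->].
    by rewrite d0_lt4 /=; lra.
  by rewrite /=; lra.
have [es gE] := alternates_factor mong sizeg path_g altg.
rewrite (catA ds [:: 4]) => /interlace_rcons[es' [lam [esE Ies']]].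
rewrite cats1 last_rcons => lam_gt4 lam_lt.
have es'_lt4 : all (fun e => e < 4) es'.
  apply: interlace_lt Ies'; apply/allP => x; rewrite mem_cat inE.
  by case/orP=> [/(allP ds_lt4)/ltW|/eqP->].
have es'_gt0 : all (fun e => 0 < e) es'.
  by apply/allP => e /(allP (interlace_gt Ies')); apply: lt_trans.
have fE' : reduced_poly a m.+1 = 'X * ('X - lam%:P) * \prod_(e <- es') ('X - e%:P).
  by rewrite fE gE esE -cats1 big_cat big_seq1 /=; ring.
exists lam, es'; split => //.
- by rewrite (reduced_poly_root_gt a_ge3 lam_gt4 es'_lt4 fE') lam_lt.
- by rewrite (interlace_size Ies') size_cat size_ds addn1.
- by apply/allP => e e_es; rewrite (allP es'_gt0) ?(allP es'_lt4).
Qed.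

Lemma reduced_poly_roots a m : 3 <= a -> exists (lam : R) (s : seq R),
  [/\ a < lam <= a + 2, lam \notin s, size s = m.+2,
      all (fun x => 0 <= x <= 4) s & count_mem 0 s = 1%N] /\
  reduced_poly a m = ('X - lam%:P) * \prod_(x <- s) ('X - x%:P).
Proof.
(* For m = 0 the value at 4 can vanish (f = X (X - 1) (X - 4) when a = 3), so
   this case is computed directly. *)
move=> a_ge3; case: m => [|m].
  exists (a + 1), [:: 0; 1]; split; last by rewrite reduced_poly0 !big_cons big_nil; ring.
  split=> //=; rewrite ?inE ?eqxx ?oner_eq0 //.
  - by apply/andP; split; lra.
  - by rewrite negb_or; apply/andP; split; apply/eqP; lra.
  - by rewrite !lexx ler01 /=; lra.
have [lam [es [lam_gt4 /andP[a_lt lam_lt] size_es es_in fE]]] :=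
  reduced_poly_factor m a_ge3.
exists lam, (0 :: es); split; last by rewrite fE big_cons; ring.
have es_gt0 e : e \in es -> 0 < e by move/(allP es_in)/andP=> [].
have es_lt4 e : e \in es -> e < 4 by move/(allP es_in)/andP=> [].
split => /=.
- by rewrite a_lt ltW.
- rewrite inE negb_or; apply/andP; split; first by apply/eqP; lra.
  by apply/negP => /es_lt4; lra.
- by rewrite size_es.
- rewrite lexx /=; apply/andP; split; first lra.
  by apply/allP => e e_es; rewrite ltW ?es_gt0 ?ltW ?es_lt4.
- by rewrite eqxx; congr S; apply/count_memPn/negP => /es_gt0; rewrite ltxx.
Qed.

End RootLocation.

Theorem proposition8 (R : rcfType) (p q : nat) (hp : (3 <= p)%N) (hq : (2 <= q)%N) :
  exists (lam : R) (s : seq R),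
    [/\ p%:R < lam <= p%:R + 2,
        lam \notin s,
        size s = q,
        all (fun x => 0 <= x <= 4) s &
        count_mem 0 s = 1%N] /\
        char_poly (KC_laplacian R p q)
          = ('X - (p%:R)%:P) ^+ (p - 2) * ('X - lam%:P) * \prod_(x <- s) ('X - x%:P).
Proof.
case: p hp => [|[|[|p']]] // _; case: q hq => [|[|q']] // _.
have p_ge3 : 3 <= p'.+3%:R :> R by rewrite ler_nat.
have [lam [s [spec fE]]] := reduced_poly_roots q' p_ge3.
by exists lam, s; rewrite char_poly_KC fE mulrA subn2.
Qed.
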